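(* Let $(\mathcal{P},d)$ be a tree metric given by the weighted tree $T$, and let $\alpha>0$. In the greedy-routing network creation game on $(\mathcal{P},d)$ with edge price $\alpha$, the profile $\mathbf{s}^T$ (every agent $u$ builds edges exactly to its neighbours in $T$) is the unique Greedy Equilibrium. Consequently it is also the unique Nash equilibrium.
   Context: A tree metric on a finite set $\mathcal{P}$ is given by a spanning tree $T$ on $\mathcal{P}$ with positive edge weights, $d(x,y)=d_T(x,y)$ being the weight of the unique $x$–$y$ path in $T$. Game: agents are the points of $\mathcal{P}$; agent $u$'s strategy is $S_u\subseteq\mathcal{P}\setminus\{u\}$; a profile $\mathbf{s}$ defines the directed network with arcs $(u,v)$, $v\in S_u$, of length $d(u,v)$. A greedy path from $u$ to $v$ is a directed path $u=x_1,\dots,x_j=v$ of arcs with $d(x_i,v)>d(x_{i+1},v)$ for all $i$. $\mathrm{stretch}(u,v)$ is the minimum length of a greedy path from $u$ to $v$ divided by $d(u,v)$, or a fixed sufficiently large penalty constant $Z$ if none exists. Cost: $c_u(\mathbf{s})=\sum_{v\ne u}\mathrm{stretch}(u,v)+\alpha|S_u|$. A Greedy Equilibrium is a profile in which no agent can strictly decrease its cost by adding one element to, deleting one element from, or swapping one element of its strategy (others fixed). A Nash equilibrium is a profile in which no agent can strictly decrease its cost by any change of its own strategy; every Nash equilibrium is a Greedy Equilibrium. *)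

From HB Require Import structures.
From mathcomp Require Import all_boot all_order all_algebra.
Set Implicit Arguments. Unset Strict Implicit. Unset Printing Implicit Defensive.
Import Order.TTheory GRing.Theory Num.Theory.
Local Open Scope ring_scope.

Section Defs.
Variables (R : realFieldType) (P : finType).

Definition simple_path (E : rel P) (x y : P) (p : seq P) : bool :=
  [&& path E x p, last x p == y & uniq (x :: p)].

Definition is_tree (E : rel P) : Prop :=
  irreflexive E /\ symmetric E /\
  forall x y : P, exists! p : seq P, simple_path E x y p.

Definition walk_length (f : P -> P -> R) (x : P) (p : seq P) : R :=
  \sum_(e <- zip (x :: p) p) f e.1 e.2.

Definition is_tree_metric (E : rel P) (w : P -> P -> R) (d : P -> P -> R) : Prop :=
  is_tree E /\
  (forall x y, E x y -> 0 < w x y) /\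
  (forall x y, E x y -> w x y = w y x) /\
  (forall x y p, simple_path E x y p -> d x y = walk_length w x p).

Definition profile := P -> {set P}.

Definition valid_profile (s : profile) : Prop := forall u, u \notin s u.

Definition tree_profile (E : rel P) : profile := fun u => [set v | E u v].

Definition greedy_arc (d : P -> P -> R) (s : profile) (v : P) : rel P :=
  fun x y => (y \in s x) && (d y v < d x v).

Definition greedy_path (d : P -> P -> R) (s : profile) (u v : P) (p : seq P) : bool :=
  path (greedy_arc d s v) u p && (last u p == v).

(* All sequences over P of length at most #|P|.  Every greedy path visits
   pairwise distinct vertices (distance to v strictly decreases), so every
   greedy path u :: p has p among these. *)
Definition short_seqs : seq (seq P) :=
  flatten [seq [seq tval t | t : k.-tuple P] | k <- iota 0 #|P|.+1].

Definition seq_min (s : seq R) : option R :=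
  foldr (fun x acc => Some (match acc with None => x | Some y => Num.min x y end))
        None s.

Definition stretch (d : P -> P -> R) (Z : R) (s : profile) (u v : P) : R :=
  match seq_min [seq walk_length d u p | p <- short_seqs & greedy_path d s u v p] with
  | Some m => m / d u v
  | None => Z
  end.

Definition cost (d : P -> P -> R) (Z alpha : R) (s : profile) (u : P) : R :=
  \sum_(v | v != u) stretch d Z s u v + alpha * #|s u|%:R.

Definition deviate (s : profile) (u : P) (S : {set P}) : profile :=
  fun x => if x == u then S else s x.

Definition greedy_move (u : P) (S S' : {set P}) : Prop :=
  (exists v, [/\ v \notin S, v != u & S' = v |: S]) \/
  (exists v, v \in S /\ S' = S :\ v) \/
  (exists x y, [/\ x \in S, y \notin S, y != u & S' = y |: (S :\ x)]).

Definition greedy_equilibrium (d : P -> P -> R) (Z alpha : R) (s : profile) : Prop :=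
  forall u S', greedy_move u (s u) S' ->
    ~ (cost d Z alpha (deviate s u S') u < cost d Z alpha s u).

Definition nash_equilibrium (d : P -> P -> R) (Z alpha : R) (s : profile) : Prop :=
  forall u (S' : {set P}), u \notin S' ->
    ~ (cost d Z alpha (deviate s u S') u < cost d Z alpha s u).

End Defs.

(* In a tree metric every greedy path has stretch at least 1, and stretch
   exactly 1 is achieved to v from u as soon as every vertex on the tree route
   from u to v owns its next tree edge towards v.  Group the targets of an
   agent u by the first edge ux of their tree route (the branch of ux).  In a
   Greedy Equilibrium u owns every tree edge ux, by induction on the size of
   the branch: otherwise, since the deeper vertices of the branch own their
   edges, swapping any owned vertex of the branch for x, or buying x when u
   owns none, reaches the whole branch with stretch 1 and strictly lowers the
   stretch to x (which was > 1, resp. the penalty Z > 1 + alpha).  Once all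
   tree edges are owned every stretch is 1, so any extra edge can be dropped
   for a saving of alpha.  Conversely, in s^T any deviation either still meets
   every branch of u, and then keeps at least deg u edges, or leaves a branch
   unreachable and pays the penalty Z. *)

From HB Require Import structures.
From mathcomp Require Import all_boot all_order all_algebra.
From mathcomp Require Import lra.
Set Implicit Arguments. Unset Strict Implicit. Unset Printing Implicit Defensive.
Import Order.TTheory GRing.Theory Num.Theory.
Local Open Scope ring_scope.

Section WalkLength.
Variables (R : realFieldType) (P : finType).
Implicit Types (f : P -> P -> R) (x y : P) (p q : seq P).

Lemma walk_length_nil f x : walk_length f x [::] = 0.
Proof. by rewrite /walk_length big_nil. Qed.

Lemma walk_length_cons f x y p :
  walk_length f x (y :: p) = f x y + walk_length f y p.
Proof. by rewrite /walk_length /= big_cons. Qed.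

Lemma walk_length_cat f x p q :
  walk_length f x (p ++ q) = walk_length f x p + walk_length f (last x p) q.
Proof.
elim: p x => [|y p IH] x /=; first by rewrite walk_length_nil add0r.
by rewrite !walk_length_cons IH addrA.
Qed.

Lemma walk_length_rcons f x p y :
  walk_length f x (rcons p y) = walk_length f x p + f (last x p) y.
Proof.
by rewrite -cats1 walk_length_cat walk_length_cons walk_length_nil addr0.
Qed.

Lemma last_rev_belast x p : last (last x p) (rev (belast x p)) = x.
Proof.
have -> : last (last x p) (rev (belast x p)) = last x (rev (x :: p)).
  by rewrite [x :: p]lastI rev_rcons.
by rewrite rev_cons last_rcons.
Qed.

Lemma mem_rev_belast x p z :
  (z \in last x p :: rev (belast x p)) = (z \in x :: p).
Proof. by rewrite -rev_rcons -lastI mem_rev. Qed.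

Lemma walk_length_rev (e : rel P) f x p :
  (forall a b, e a b -> f a b = f b a) -> path e x p ->
  walk_length f (last x p) (rev (belast x p)) = walk_length f x p.
Proof.
move=> fsym; elim: p x => [|y p IH] x //= /andP[exy ep].
rewrite rev_cons walk_length_rcons IH // last_rev_belast walk_length_cons.
by rewrite addrC (fsym _ _ exy).
Qed.

Lemma walk_length_ge0 (e : rel P) f x p :
  (forall a b, e a b -> 0 < f a b) -> path e x p -> 0 <= walk_length f x p.
Proof.
move=> fpos; elim: p x => [|y p IH] x /=; first by rewrite walk_length_nil.
by case/andP=> exy ep; rewrite walk_length_cons addr_ge0 ?IH // ltW ?fpos.
Qed.

End WalkLength.

Section SeqMin.
Variable R : realFieldType.
Implicit Types (l : seq R) (m : R).

Lemma seq_min_None l : seq_min l = None -> l = [::].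
Proof. by case: l. Qed.

Lemma seq_min_mem l m : seq_min l = Some m -> m \in l.
Proof.
elim: l m => [|x l IH] m //= [<-]; case e: (seq_min l) => [y|].
  by rewrite inE; case: leP => _; rewrite ?eqxx ?(IH _ e) ?orbT.
by rewrite mem_head.
Qed.

Lemma seq_min_le l m : seq_min l = Some m -> forall x, x \in l -> m <= x.
Proof.
elim: l m => [|x l IH] m //= [<-] z; case e: (seq_min l) => [y|].
  by rewrite inE ge_min => /predU1P[->|/(IH _ e) ->]; rewrite ?lexx ?orbT.
by rewrite (seq_min_None e) inE => /eqP ->.
Qed.

End SeqMin.

Section Greedy.
Variables (R : realFieldType) (P : finType) (d : P -> P -> R) (Z : R).
Implicit Types (s : profile P) (u v x y : P) (p : seq P).

Lemma greedy_path_nil s u v : greedy_path d s u v [::] = (u == v).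
Proof. by []. Qed.

Lemma greedy_path_cons s u v y p :
  greedy_path d s u v (y :: p) =
  [&& y \in s u, d y v < d u v & greedy_path d s y v p].
Proof. by rewrite /greedy_path /= /greedy_arc -!andbA. Qed.

Lemma greedy_path_uniq s u v p : greedy_path d s u v p -> uniq (u :: p).
Proof.
case/andP=> gp _; apply: (@sorted_uniq _ (fun a b => d b v < d a v)).
- by move=> a b c /= h1 h2; apply: lt_trans h1.
- by move=> a /=; rewrite ltxx.
by apply: sub_path gp => a b /andP[].
Qed.

Lemma greedy_path_short s u v p : greedy_path d s u v p -> p \in short_seqs P.
Proof.
move=> gp; have size_p : (size p < #|P|.+1)%N.
  rewrite ltnS -[size p]/(size (u :: p)).-1 -(card_uniqP (greedy_path_uniq gp)).
  exact: leq_trans (leq_pred _) (max_card _).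
apply/flattenP; exists [seq tval t | t : (size p).-tuple P].
  by apply/mapP; exists (size p); rewrite // mem_iota.
by apply/mapP; exists (in_tuple p); rewrite ?mem_enum.
Qed.

Lemma stretch_le_walk s u v p : 0 <= d u v -> greedy_path d s u v p ->
  stretch d Z s u v <= walk_length d u p / d u v.
Proof.
move=> duv_ge0 gp.
have p_in : p \in [seq q <- short_seqs P | greedy_path d s u v q].
  by rewrite mem_filter gp (greedy_path_short gp).
rewrite /stretch; case e: (seq_min _) => [m|].
  by rewrite ler_wpM2r ?invr_ge0 // (seq_min_le e) ?map_f.
by have := map_f (walk_length d u) p_in; rewrite (seq_min_None e).
Qed.

Lemma stretch_cases s u v :
  stretch d Z s u v = Z \/
  exists2 p, greedy_path d s u v p &
    stretch d Z s u v = walk_length d u p / d u v.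
Proof.
rewrite /stretch; case e: (seq_min _) => [m|]; last by left.
right; have /mapP[p] := seq_min_mem e.
by rewrite mem_filter => /andP[gp _] ->; exists p.
Qed.

Lemma stretch_no_greedy_path s u v :
  (forall p, ~~ greedy_path d s u v p) -> stretch d Z s u v = Z.
Proof.
move=> no_gp; rewrite /stretch.
suff -> : [seq p <- short_seqs P | greedy_path d s u v p] = [::] by [].
apply/eqP; rewrite -[_ == _]negbK -has_filter.
by apply/hasPn => p _; apply: no_gp.
Qed.

Lemma greedy_path_deviate s u (S : {set P}) v :
  (forall y, d y v < d u v -> (y \in S) = (y \in s u)) ->
  greedy_path d (deviate s u S) u v =1 greedy_path d s u v.
Proof.
move=> agree; case => [|y p] //; rewrite !greedy_path_cons {1}/deviate eqxx.
case: (ltP (d y v) (d u v)) => [yv|]; last by rewrite !andbF.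
rewrite agree //=; congr (_ && _); elim: p y yv => [|z p IH] y yv //.
rewrite !greedy_path_cons /deviate ifN; last first.
  by apply: contraTneq yv => ->; rewrite ltxx.
by case: (ltP (d z v) (d y v)) => zy; rewrite ?andbF // IH // (lt_trans zy).
Qed.

Lemma stretch_deviate s u (S : {set P}) v :
  (forall y, d y v < d u v -> (y \in S) = (y \in s u)) ->
  stretch d Z (deviate s u S) u v = stretch d Z s u v.
Proof.
by move=> agree; rewrite /stretch (eq_filter (greedy_path_deviate agree)).
Qed.

Lemma cost_deviate alpha s u (S : {set P}) :
  cost d Z alpha (deviate s u S) u =
  \sum_(v | v != u) stretch d Z (deviate s u S) u v + alpha * #|S|%:R.
Proof. by rewrite /cost /deviate eqxx. Qed.

Lemma cost_deviate_lt alpha s u (S : {set P}) x : x != u ->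
  (forall v, v != u -> v != x ->
     stretch d Z (deviate s u S) u v <= stretch d Z s u v) ->
  stretch d Z (deviate s u S) u x + alpha * #|S|%:R <
    stretch d Z s u x + alpha * #|s u|%:R ->
  cost d Z alpha (deviate s u S) u < cost d Z alpha s u.
Proof.
move=> xu le_rest lt_x.
rewrite cost_deviate /cost (bigD1 x) //= [in X in _ < X](bigD1 x) //=.
have : \sum_(v | (v != u) && (v != x)) stretch d Z (deviate s u S) u v <=
       \sum_(v | (v != u) && (v != x)) stretch d Z s u v.
  by apply: ler_sum => v /andP[]; apply: le_rest.
lra.
Qed.

Lemma nash_greedy_equilibrium alpha s : valid_profile s ->
  nash_equilibrium d Z alpha s -> greedy_equilibrium d Z alpha s.
Proof.
move=> valid ne u S' move; apply: ne.
case: move => [[v [_ vu ->]]|[[v [_ ->]]|[x [y [_ _ yu ->]]]]].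
- by rewrite in_setU1 negb_or eq_sym vu valid.
- by rewrite in_setD1 negb_and valid orbT.
- by rewrite in_setU1 negb_or eq_sym yu in_setD1 negb_and valid orbT.
Qed.

End Greedy.

Section TreeMetric.
Variables (R : realFieldType) (P : finType) (E : rel P) (w d : P -> P -> R).
Hypothesis tree_metric : is_tree_metric E w d.
Implicit Types (a u v x y z : P) (p q : seq P) (s : profile P).

Lemma tree_irrefl : irreflexive E.
Proof. by case: tree_metric => -[]. Qed.

Lemma tree_sym : symmetric E.
Proof. by case: tree_metric => -[_ []]. Qed.

Lemma tree_path_unique x y : exists! p, simple_path E x y p.
Proof. by case: tree_metric => -[_ [_]]. Qed.

Lemma tree_path_exists x y : exists p, simple_path E x y p.
Proof. by case: (tree_path_unique x y) => p []; exists p. Qed.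

Lemma weight_gt0 x y : E x y -> 0 < w x y.
Proof. by case: tree_metric => _ [+ _]; apply. Qed.

Lemma weight_sym x y : E x y -> w x y = w y x.
Proof. by case: tree_metric => _ [_ [+ _]]; apply. Qed.

Lemma dist_simple_path x y p : simple_path E x y p -> d x y = walk_length w x p.
Proof. by case: tree_metric => _ [_ [_]]; apply. Qed.

Lemma tree_edge_neq x y : E x y -> x != y.
Proof. by apply: contraTneq => ->; rewrite tree_irrefl. Qed.

Definition tree_path x y : seq P :=
  xchoose (tree_path_exists x y).

Lemma tree_pathP x y : simple_path E x y (tree_path x y).
Proof. exact: xchooseP. Qed.

Lemma simple_path_tree x y p : simple_path E x y p -> p = tree_path x y.
Proof.
case: (tree_path_unique x y) => q [_ q_uniq] sp.
by rewrite -(q_uniq _ sp) -(q_uniq _ (tree_pathP x y)).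
Qed.

Lemma simple_path_nil x : simple_path E x x [::].
Proof. by rewrite /simple_path /= eqxx. Qed.

Lemma simple_path_edge x y : E x y -> simple_path E x y [:: y].
Proof.
by move=> exy; rewrite /simple_path /= exy eqxx inE (tree_edge_neq exy).
Qed.

Lemma dist_xx x : d x x = 0.
Proof. by rewrite (dist_simple_path (simple_path_nil x)) walk_length_nil. Qed.

Lemma simple_path_split x y p1 z p2 : simple_path E x y (p1 ++ z :: p2) ->
  simple_path E x z (rcons p1 z) /\ simple_path E z y p2.
Proof.
case/and3P; rewrite cat_path last_cat -cat_cons cat_uniq.
move=> /andP[ep1 /= /andP[ez ep2]] ly /and3P[up1 /= /norP[zp1 _] up2].
split; last by apply/and3P.
rewrite /simple_path rcons_path ep1 ez last_rcons eqxx -cats1 -cat_cons cat_uniq.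
by rewrite /= orbF zp1 up1.
Qed.

Lemma dist_split x y p1 z p2 : simple_path E x y (p1 ++ z :: p2) ->
  d x y = d x z + d z y.
Proof.
move=> sp; case: (simple_path_split sp) => sp1 sp2.
rewrite (dist_simple_path sp) (dist_simple_path sp1) (dist_simple_path sp2).
by rewrite walk_length_cat walk_length_cons walk_length_rcons addrA.
Qed.

Lemma dist_ge0 x y : 0 <= d x y.
Proof.
have /and3P[ep _ _] := tree_pathP x y.
by rewrite (dist_simple_path (tree_pathP x y)) (walk_length_ge0 weight_gt0).
Qed.

Lemma dist_gt0 x y : x != y -> 0 < d x y.
Proof.
have sp := tree_pathP x y; rewrite (dist_simple_path sp).
case: (tree_path x y) sp => [/and3P[_ /= /eqP -> _]|a q]; first by rewrite eqxx.
case/and3P=> /= /andP[exa ep] _ _ _.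
by rewrite walk_length_cons ltr_wpDr ?weight_gt0 ?(walk_length_ge0 weight_gt0).
Qed.

Lemma simple_path_rev x y p :
  simple_path E x y p -> simple_path E y x (rev (belast x p)).
Proof.
case/and3P=> ep /eqP <- up; rewrite /simple_path last_rev_belast eqxx andTb.
rewrite -rev_rcons -lastI rev_uniq up andbT rev_path.
by apply: sub_path ep => a b /=; rewrite tree_sym.
Qed.

Lemma dist_sym x y : d y x = d x y.
Proof.
have sp := tree_pathP x y; have /and3P[ep /eqP ly _] := sp.
rewrite (dist_simple_path sp) (dist_simple_path (simple_path_rev sp)).
by have := walk_length_rev weight_sym ep; rewrite ly.
Qed.

Lemma dist_le_edge x x1 y : E x x1 -> d x y <= w x x1 + d x1 y.
Proof.
move=> ex; have sp := tree_pathP x1 y.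
case: (boolP (x \in x1 :: tree_path x1 y)) => [|x_out].
  rewrite inE (negPf (tree_edge_neq ex)) /= => x_in.
  move: sp; case/splitPr: x_in => q1 q2 sp.
  by rewrite (dist_split sp); have := weight_gt0 ex; have := dist_ge0 x1 x; lra.
have sp' : simple_path E x y (x1 :: tree_path x1 y).
  by case/and3P: sp => ep ly up; rewrite /simple_path /= ex ep ly [uniq _]/= x_out.
by rewrite (dist_simple_path sp') walk_length_cons -(dist_simple_path sp).
Qed.

Lemma dist_le_tree_walk x p : path E x p -> d x (last x p) <= walk_length w x p.
Proof.
elim: p x => [|y p IH] x /=; first by rewrite dist_xx walk_length_nil.
case/andP=> exy ep; rewrite walk_length_cons.
by apply: le_trans (dist_le_edge _ exy) _; rewrite lerD2l IH.
Qed.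

Lemma dist_triangle x y z : d x z <= d x y + d y z.
Proof.
have sp1 := tree_pathP x y; have sp2 := tree_pathP y z.
have /and3P[ep1 /eqP ly _] := sp1; have /and3P[ep2 /eqP lz _] := sp2.
have ep : path E x (tree_path x y ++ tree_path y z) by rewrite cat_path ep1 ly ep2.
have := dist_le_tree_walk ep; rewrite last_cat ly lz walk_length_cat ly.
by rewrite -(dist_simple_path sp1) -(dist_simple_path sp2).
Qed.

Lemma dist_le_walk x p : d x (last x p) <= walk_length d x p.
Proof.
elim: p x => [|y p IH] x /=; first by rewrite dist_xx walk_length_nil.
by rewrite walk_length_cons (le_trans (dist_triangle x y _)) // lerD2l IH.
Qed.

Definition next_hop u v : P := head u (tree_path u v).

Lemma tree_path_next_hop u v : u != v ->
  tree_path u v = next_hop u v :: behead (tree_path u v).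
Proof.
rewrite /next_hop; have /and3P[_ lv _] := tree_pathP u v.
by case: (tree_path u v) lv => [/= /eqP ->|]; rewrite ?eqxx.
Qed.

Lemma next_hop_edge u v : u != v -> E u (next_hop u v).
Proof.
move=> uv; have /and3P[+ _ _] := tree_pathP u v.
by rewrite (tree_path_next_hop uv) /= => /andP[].
Qed.

Lemma next_hop_neighbour u x : E u x -> next_hop u x = x.
Proof.
by move=> ex; rewrite /next_hop -(simple_path_tree (simple_path_edge ex)).
Qed.

Lemma dist_next_hop u v : u != v ->
  d u v = d u (next_hop u v) + d (next_hop u v) v.
Proof.
move=> uv; have := tree_pathP u v; rewrite (tree_path_next_hop uv) -[_ :: _]cat0s.
exact: dist_split.
Qed.

Lemma simple_paths_disjoint a b1 b2 p1 p2 :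
  simple_path E a b1 p1 -> simple_path E a b2 p2 -> head a p1 != head a p2 ->
  [predI p1 & p2] =i pred0.
Proof.
move=> sp1 sp2 heads z; rewrite !inE; apply/negP => /andP[z1 z2].
move: sp1 sp2 heads; case/splitPr: z1 => q1 r1; case/splitPr: z2 => q2 r2.
move=> /simple_path_split[sq1 _] /simple_path_split[sq2 _].
have [->] : (q1, z) = (q2, z).
  by apply: rcons_inj; rewrite (simple_path_tree sq1) (simple_path_tree sq2).
by case: q2 {sq1 sq2} => [|? ?] /=; rewrite eqxx.
Qed.

Lemma dist_through u y v : y != u -> v != u -> next_hop u y != next_hop u v ->
  d y v = d y u + d u v.
Proof.
move=> yu vu hops; have spy := tree_pathP u y; have spv := tree_pathP u v.
have spy' := simple_path_rev spy.
have /and3P[_ /eqP ly _] := spy; have /and3P[ey' /eqP ly' uy'] := spy'.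
have /and3P[ev /eqP lv] := spv; rewrite cons_uniq => /andP[u_notin_v uv].
set py := rev (belast u (tree_path u y)) in spy' ey' ly' uy' *.
have mem_py z : (z \in y :: py) = (z \in u :: tree_path u y).
  by rewrite -(mem_rev_belast u) ly.
have sp : simple_path E y v (py ++ tree_path u v).
  rewrite /simple_path cat_path ey' ly' ev last_cat ly' lv eqxx andTb.
  rewrite -cat_cons cat_uniq uy' uv andbT; apply/hasPn => z zv.
  rewrite mem_py inE negb_or; apply/andP; split.
    by apply: contraTneq zv => ->.
  apply/negP => zy; have := simple_paths_disjoint spy spv hops z.
  by rewrite !inE zy zv.
by rewrite (dist_simple_path sp) walk_length_cat ly' -(dist_simple_path spy')
  -(dist_simple_path spv).
Qed.

Section Stretch.
Variables (Z : R) (s : profile P).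

Lemma greedy_path_length u v p :
  greedy_path d s u v p -> d u v <= walk_length d u p.
Proof. by case/andP=> _ /eqP <-; apply: dist_le_walk. Qed.

Lemma stretch_ge1 u v : 1 <= Z -> u != v -> 1 <= stretch d Z s u v.
Proof.
move=> Z_ge1 uv; case: (stretch_cases d Z s u v) => [-> //|[p gp ->]].
by rewrite ler_pdivlMr ?dist_gt0 // mul1r greedy_path_length.
Qed.

Lemma stretch_gt1 u v : 1 < Z -> u != v ->
  (forall p, greedy_path d s u v p -> d u v < walk_length d u p) ->
  1 < stretch d Z s u v.
Proof.
move=> Z_gt1 uv longer; case: (stretch_cases d Z s u v) => [-> //|[p gp ->]].
by rewrite ltr_pdivlMr ?dist_gt0 // mul1r longer.
Qed.

Lemma greedy_tree_route a v :
  (forall a', a' != v -> d a v = d a a' + d a' v -> next_hop a' v \in s a') ->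
  exists2 p, greedy_path d s a v p & walk_length d a p = d a v.
Proof.
move: {2}#|[set z | d z v < d a v]| (leqnn #|[set z | d z v < d a v]|) => n.
elim: n a => [|n IH] a closer route; have [->|av] := eqVneq a v.
- by exists [::]; rewrite ?greedy_path_nil ?walk_length_nil ?dist_xx.
- move: closer; rewrite leqn0 => /eqP/cards0_eq/setP/(_ v).
  by rewrite !inE dist_xx dist_gt0.
- by exists [::]; rewrite ?greedy_path_nil ?walk_length_nil ?dist_xx.
set b := next_hop a v; have dab := dist_next_hop av; rewrite -/b in dab.
have ab_gt0 : 0 < d a b by rewrite dist_gt0 // tree_edge_neq // next_hop_edge.
have [p gp lp] : exists2 p, greedy_path d s b v p & walk_length d b p = d b v.
  apply: IH => [|a' a'v ba'].
    rewrite -ltnS (leq_trans _ closer) // proper_card //; apply/properP; split.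
      by apply/subsetP=> z; rewrite !inE => /lt_trans; apply; rewrite dab ltrDr.
    by exists b; rewrite !inE ?ltxx // dab ltrDr.
  apply: route => //; apply/eqP; rewrite eq_le dist_triangle dab ba' addrA lerD2r.
  by rewrite dist_triangle.
exists (b :: p); last by rewrite walk_length_cons lp dab.
by rewrite greedy_path_cons gp andbT dab ltrDr ab_gt0 route ?dist_xx ?add0r.
Qed.

Lemma stretch_le1 u v : u != v ->
  (forall a', a' != v -> d u v = d u a' + d a' v -> next_hop a' v \in s a') ->
  stretch d Z s u v <= 1.
Proof.
move=> uv route; have [p gp lp] := greedy_tree_route route.
rewrite (le_trans (stretch_le_walk Z (dist_ge0 u v) gp)) // lp.
by rewrite divff ?gt_eqF ?dist_gt0.
Qed.

Lemma stretch_tree_edges_le1 u v :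
  (forall a b, E a b -> b \in s a) -> u != v -> stretch d Z s u v <= 1.
Proof.
move=> edges uv; apply: stretch_le1 => // a av _.
exact/edges/next_hop_edge.
Qed.

End Stretch.

Definition branch u x : {set P} := [set z | (z != u) && (next_hop u z == x)].

Lemma next_hop_neq u v : u != v -> next_hop u v != u.
Proof. by move=> uv; rewrite eq_sym tree_edge_neq // next_hop_edge. Qed.

Lemma next_hop_closer u y v : y != u -> v != u -> d y v < d u v ->
  next_hop u y = next_hop u v.
Proof.
move=> yu vu; apply: contraTeq => hops.
by rewrite -leNgt (dist_through yu vu hops) lerDr dist_ge0.
Qed.

Lemma next_hop_between u a v : a != u -> a != v -> d u v = d u a + d a v ->
  next_hop u a = next_hop u v /\ next_hop a u != next_hop a v.
Proof.
move=> au av between; have au_gt0 := dist_gt0 au.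
have vu : v != u.
  by apply/eqP => vu; move: between; rewrite vu dist_xx (dist_sym a u); lra.
split.
  apply/eqP; apply: contraT => hops; have := dist_through au vu hops.
  by rewrite between (dist_sym a u); lra.
apply/eqP => hops; have := dist_next_hop av; have := dist_gt0 (next_hop_neq av).
rewrite -hops; set h := next_hop a u.
have := dist_next_hop au; have := dist_triangle u h v.
have := dist_sym h a; have := dist_sym h u; have := dist_sym a u.
lra.
Qed.

Lemma branch_between_proper u a v :
  a != u -> a != v -> d u v = d u a + d a v ->
  branch a (next_hop a v) \proper branch u (next_hop u v).
Proof.
move=> au av between; have [hop_ua hops_a] := next_hop_between au av between.
apply/properP; split; last by exists a; rewrite !inE ?eqxx // au hop_ua eqxx.
apply/subsetP=> z; rewrite !inE => /andP[za /eqP hop_az].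
have zu : z != u by apply: contraNneq hops_a => <-; rewrite hop_az.
rewrite zu -hop_ua /=; apply: contraT; rewrite eq_sym => hops_u.
have ua : u != a by rewrite eq_sym.
have hops_az : next_hop a u != next_hop a z by rewrite hop_az.
have := dist_through ua za hops_az.
have := dist_through au zu hops_u; have := dist_gt0 au.
rewrite (dist_sym a u) (dist_sym z u); lra.
Qed.

Lemma greedy_path_first_hop s u v y p : v != u ->
  greedy_path d s u v (y :: p) -> y \in s u /\ y \in branch u (next_hop u v).
Proof.
move=> vu; rewrite greedy_path_cons => /and3P[ys yv _]; split=> //.
have yu : y != u by apply: contraTneq yv => ->; rewrite ltxx.
by rewrite inE yu (next_hop_closer yu vu yv) eqxx.
Qed.

Lemma stretch_disjoint_branch Z s u v : v != u ->
  [disjoint s u & branch u (next_hop u v)] -> stretch d Z s u v = Z.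
Proof.
move=> vu dis; apply: stretch_no_greedy_path => -[|y p].
  by rewrite greedy_path_nil eq_sym.
apply/negP => /(greedy_path_first_hop vu)[ys yB].
by rewrite (disjointFl dis yB) in ys.
Qed.

Lemma stretch_missing_edge_gt1 Z s u x : 1 < Z -> E u x -> x \notin s u ->
  1 < stretch d Z s u x.
Proof.
move=> Z_gt1 ux xn; have xu := tree_edge_neq ux; rewrite eq_sym in xu.
apply: stretch_gt1 => //; first by rewrite eq_sym.
case=> [|y p gp]; first by rewrite greedy_path_nil eq_sym (negPf xu).
have [ys] := greedy_path_first_hop xu gp.
rewrite inE (next_hop_neighbour ux) => /andP[yu /eqP hop_uy].
have yx : y != x by apply: contraNneq xn => <-.
have uy : u != y by rewrite eq_sym.
move: gp; rewrite greedy_path_cons => /and3P[_ _ /greedy_path_length].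
rewrite walk_length_cons (dist_next_hop uy) hop_uy.
by have := dist_gt0 yx; have := dist_sym x y; lra.
Qed.

Section BranchDeviation.
Variables (Z : R) (s : profile P) (u x : P) (S : {set P}).
Hypotheses (Z_ge1 : 1 <= Z) (ux : E u x) (xS : x \in S)
  (S_out : forall y, y \notin branch u x -> (y \in S) = (y \in s u))
  (inner_edges : forall a y, a != u -> E a y ->
     (#|branch a y| < #|branch u x|)%N -> y \in s a).

Lemma stretch_deviate_branch_le1 v : v \in branch u x ->
  stretch d Z (deviate s u S) u v <= 1.
Proof.
rewrite inE => /andP[vu /eqP hop_uv]; rewrite eq_sym in vu.
apply: stretch_le1 => // a av between; rewrite /deviate.
have [->|au] := eqVneq a u; first by rewrite hop_uv.
apply: inner_edges => //; first exact: next_hop_edge.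
by rewrite -hop_uv proper_card // branch_between_proper.
Qed.

Lemma stretch_deviate_branch_le v : v != u ->
  stretch d Z (deviate s u S) u v <= stretch d Z s u v.
Proof.
move=> vu; have [vB|vB] := boolP (v \in branch u x).
  by rewrite (le_trans (stretch_deviate_branch_le1 vB)) // stretch_ge1 // eq_sym.
rewrite le_eqVlt stretch_deviate ?eqxx // => y yv; apply: S_out.
have yu : y != u by apply: contraTneq yv => ->; rewrite ltxx.
by rewrite inE yu (next_hop_closer yu vu yv); rewrite inE vu in vB.
Qed.

Lemma cost_deviate_branch_lt (alpha : R) :
  alpha * #|S|%:R + 1 < stretch d Z s u x + alpha * #|s u|%:R ->
  cost d Z alpha (deviate s u S) u < cost d Z alpha s u.
Proof.
have xu : x != u by rewrite eq_sym tree_edge_neq.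
have xB : x \in branch u x by rewrite inE xu next_hop_neighbour ?eqxx.
move=> gain; apply: cost_deviate_lt xu _ _.
  by move=> v vu _; apply: stretch_deviate_branch_le.
by have := stretch_deviate_branch_le1 xB; lra.
Qed.

End BranchDeviation.

Lemma greedy_equilibrium_tree_edges (Z alpha : R) s :
  0 < alpha -> 1 + alpha < Z -> greedy_equilibrium d Z alpha s ->
  forall u x, E u x -> x \in s u.
Proof.
move=> alpha_gt0 Z_large ge; have Z_gt1 : 1 < Z by lra.
suff edges n : forall u x, (#|branch u x| < n)%N -> E u x -> x \in s u.
  by move=> u x; apply: (edges #|branch u x|.+1).
elim: n => [|n IH] u x; first by rewrite ltn0.
move=> size_B ux; have [//|xn] := boolP (x \in s u); exfalso.
have xu : x != u by rewrite eq_sym tree_edge_neq.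
have x_outside z : z \notin branch u x -> (z == x) = false.
  by apply: contraNF => /eqP ->; rewrite inE xu next_hop_neighbour ?eqxx.
have inner a y :
    a != u -> E a y -> (#|branch a y| < #|branch u x|)%N -> y \in s a.
  by move=> _ ay lt; apply: (IH _ _ (leq_trans lt size_B) ay).
case: (pickP [predI s u & branch u x]) => [y /andP[ys yB]|none].
  apply: (ge u (x |: (s u :\ y))); first by right; right; exists y, x.
  apply: (cost_deviate_branch_lt (ltW Z_gt1) ux); [exact: setU11| |exact: inner|].
    move=> z zB; have zy : z != y by apply: contraNneq zB => ->.
    by rewrite in_setU1 in_setD1 zy (x_outside _ zB).
  have card_S : #|x |: (s u :\ y)| = #|s u|.
    by rewrite cardsU1 in_setD1 (negPf xn) andbF [RHS](cardsD1 y) ys.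
  by rewrite card_S; have := stretch_missing_edge_gt1 Z_gt1 ux xn; lra.
apply: (ge u (x |: s u)); first by left; exists x.
apply: (cost_deviate_branch_lt (ltW Z_gt1) ux); [exact: setU11| |exact: inner|].
  by move=> z zB; rewrite in_setU1 (x_outside _ zB).
have stretch_Z : stretch d Z s u x = Z.
  rewrite stretch_disjoint_branch // (next_hop_neighbour ux).
  by apply/pred0P => y; rewrite !inE; have := none y; rewrite !inE.
by rewrite cardsU1 xn natrD mulrDr mulr1 stretch_Z; lra.
Qed.

Lemma greedy_equilibrium_tree_neighbours (Z alpha : R) s :
  0 < alpha -> 1 + alpha < Z -> greedy_equilibrium d Z alpha s ->
  forall u y, y \in s u -> E u y.
Proof.
move=> alpha_gt0 Z_large ge u y ys; have [//|uy] := boolP (E u y); exfalso.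
have edges := greedy_equilibrium_tree_edges alpha_gt0 Z_large ge.
apply: (ge u (s u :\ y)); first by right; left; exists y.
have edges' a b : E a b -> b \in deviate s u (s u :\ y) a.
  rewrite /deviate; case: eqP => [-> ub|_]; last exact: edges.
  by rewrite in_setD1 edges // andbT; apply: contraNneq uy => <-.
have : \sum_(v | v != u) stretch d Z (deviate s u (s u :\ y)) u v <=
       \sum_(v | v != u) stretch d Z s u v.
  apply: ler_sum => v vu; rewrite eq_sym in vu.
  rewrite (le_trans (stretch_tree_edges_le1 _ edges' vu)) //.
  by rewrite stretch_ge1 //; lra.
rewrite cost_deviate /cost [in X in _ < X](cardsD1 y) ys natrD mulrDr mulr1.
lra.
Qed.

Lemma greedy_equilibrium_tree_profile (Z alpha : R) s :
  0 < alpha -> 1 + alpha < Z -> greedy_equilibrium d Z alpha s ->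
  forall u, s u = tree_profile E u.
Proof.
move=> alpha_gt0 Z_large ge u; apply/setP => y; rewrite inE.
apply/idP/idP.
  exact: (greedy_equilibrium_tree_neighbours alpha_gt0 Z_large ge).
exact: (greedy_equilibrium_tree_edges alpha_gt0 Z_large ge).
Qed.

Lemma tree_profile_nash (Z alpha : R) s :
  0 < alpha -> #|P|%:R * (1 + alpha) <= Z ->
  (forall u, s u = tree_profile E u) -> nash_equilibrium d Z alpha s.
Proof.
move=> alpha_gt0 Z_large s_tree u S' _.
have n_ge1 : 1 <= #|P|%:R :> R by rewrite ler1n; apply/card_gt0P; exists u.
have n_alpha_ge0 : 0 <= #|P|%:R * alpha by rewrite mulr_ge0 ?ler0n ?ltW.
have Z_ge1 : 1 <= Z by lra.
have edges a b : E a b -> b \in s a by rewrite s_tree inE.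
have cost_tree : cost d Z alpha s u = #|P|.-1%:R + alpha * #|s u|%:R.
  rewrite /cost (eq_bigr (fun=> 1)) ?sumr_const ?cardC1 // => v vu.
  apply/eqP; rewrite eq_le stretch_tree_edges_le1 // 1?eq_sym //.
  by rewrite stretch_ge1 // eq_sym.
have stretch_ge1' v : v != u -> 1 <= stretch d Z (deviate s u S') u v.
  by move=> vu; rewrite stretch_ge1 // eq_sym.
apply/negP; rewrite -leNgt cost_deviate cost_tree.
have sum_ge : #|P|.-1%:R <= \sum_(v | v != u) stretch d Z (deviate s u S') u v.
  by rewrite -(cardC1 u) -sumr_const; apply: ler_sum => v; apply: stretch_ge1'.
have [/forallP covered|] := boolP [forall x, E u x ==> (x \in next_hop u @: S')].
  apply: lerD sum_ge _; rewrite ler_pM2l // ler_nat.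
  apply: leq_trans (leq_imset_card (next_hop u) S').
  apply/subset_leq_card/subsetP => x; rewrite s_tree inE => ux.
  by have := covered x; rewrite ux.
rewrite negb_forall => /existsP[x]; rewrite negb_imply => /andP[ux x_uncovered].
have xu : x != u by rewrite eq_sym tree_edge_neq.
have stretch_Z : stretch d Z (deviate s u S') u x = Z.
  rewrite stretch_disjoint_branch // /deviate eqxx (next_hop_neighbour ux).
  apply/pred0P => y; rewrite !inE; apply/negbTE/negP => /and3P[yS' _ /eqP hop].
  by move: x_uncovered; rewrite -hop imset_f.
have : Z <= \sum_(v | v != u) stretch d Z (deviate s u S') u v.
  rewrite (bigD1 x) //= stretch_Z lerDl sumr_ge0 // => v /andP[vu _].
  exact: le_trans ler01 (stretch_ge1' v vu).
have : #|P|.-1%:R <= #|P|%:R :> R by rewrite ler_nat leq_pred.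
have : alpha * #|s u|%:R <= #|P|%:R * alpha.
  by rewrite mulrC ler_pM2r // ler_nat max_card.
have : 0 <= alpha * #|S'|%:R by rewrite mulr_ge0 ?ler0n ?ltW.
lra.
Qed.

End TreeMetric.

Theorem theorem3p4 (R : realFieldType) (P : finType) (E : rel P)
    (w d : P -> P -> R) (alpha : R) :
  is_tree_metric E w d -> 0 < alpha ->
  exists Z0 : R, forall Z : R, Z0 <= Z ->
    forall s : profile P, valid_profile s ->
      (greedy_equilibrium d Z alpha s <-> (forall u, s u = tree_profile E u)) /\
      (nash_equilibrium d Z alpha s <-> (forall u, s u = tree_profile E u)).
Proof.
move=> tree_metric alpha_gt0.
(* Z0 exceeds #|P| * (1 + alpha), which bounds the cost of any agent in s^T,
   and, when P is nonempty, also 1 + alpha. *)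
exists (#|P|.+1%:R * (1 + alpha)) => Z Z_large s valid.
rewrite -natr1 mulrDl mul1r in Z_large.
have ne_ge := @nash_greedy_equilibrium _ _ d Z alpha s valid.
have tree_ne : (forall u, s u = tree_profile E u) -> nash_equilibrium d Z alpha s.
  by apply: (tree_profile_nash tree_metric alpha_gt0); lra.
have ge_tree : greedy_equilibrium d Z alpha s -> forall u, s u = tree_profile E u.
  move=> ge u; apply: (greedy_equilibrium_tree_profile tree_metric alpha_gt0 _ ge).
  have : 1 <= #|P|%:R :> R by rewrite ler1n; apply/card_gt0P; exists u.
  have : 0 <= #|P|%:R * alpha by rewrite mulr_ge0 ?ler0n ?ltW.
  lra.
split; split=> [equilibrium|s_tree]; first exact: ge_tree.
- exact/ne_ge/tree_ne.
- exact/ge_tree/ne_ge.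
- exact: tree_ne.
Qed.
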